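(* Let $P_d$ denote the probability that a $d\times d$ matrix with independent, uniformly distributed entries in $\{0,1\}$ is singular. Then $P_d>\frac{d^2}{2^d}$ for all sufficiently large $d$. *)

From mathcomp Require Import all_boot all_order all_algebra.
Set Implicit Arguments. Unset Strict Implicit. Unset Printing Implicit Defensive.
Import Order.TTheory GRing.Theory Num.Theory.
Local Open Scope ring_scope.

Definition mx01 (d : nat) (B : 'M[bool]_d) : 'M[rat]_d :=
  \matrix_(i, j) (B i j)%:R.

(* A 0/1 matrix is singular iff its determinant (over Q, equivalently R) is 0. *)
Definition singular01 (d : nat) (B : 'M[bool]_d) : bool :=
  \det (mx01 B) == 0.

Definition P (d : nat) : rat :=
  (#|[pred B : 'M[bool]_d | singular01 B]|)%:R / (2 ^ (d * d))%N%:R.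

From mathcomp Require Import all_boot all_order all_algebra.
From mathcomp Require Import zify.
Import Order.TTheory GRing.Theory Num.Theory.

(* A 0/1 matrix is singular as soon as some row or column is zero or repeats an
   earlier one.  These d(d+1) events each have probability at least 2^-d, and any
   two of them force two distinct lines of the matrix, hence have probability at
   most 2^(1-2d).  By the Bonferroni inequality
     P_d >= d(d+1) 2^-d - (d(d+1))^2 2^(1-2d),
   which exceeds d^2 2^-d as soon as d 2^(d-1) > (d^2+d)^2, e.g. for d >= 30. *)

Lemma card_bigcup_ge (T I : finType) (J : {set I}) (A : I -> {set T}) :
  (\sum_(e in J) #|A e| <= #|\bigcup_(e in J) A e| +
     \sum_(e in J) \sum_(e' in J | e' != e) #|A e :&: A e'|)%N.
Proof.
have card_sum (X : {set T}) : #|X| = (\sum_(x : T) (x \in X))%N.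
  by rewrite -sum1_card big_mkcond; apply: eq_bigr => x _; case: (x \in X).
under eq_bigr do rewrite card_sum.
under [X in (_ <= _ + X)%N]eq_bigr => e _ do under eq_bigr => e' _ do rewrite card_sum.
under [X in (_ <= _ + X)%N]eq_bigr => e _ do rewrite exchange_big.
rewrite exchange_big [X in (_ <= _ + X)%N]exchange_big card_sum -big_split.
apply: leq_sum => x _ /=.
case: (pickP (fun e => (e \in J) && (x \in A e))) => [e0 /andP [e0J xe0] | none]; last first.
  by rewrite big1 // => e eJ; have := none e; rewrite eJ /= => ->.
have -> : x \in \bigcup_(e in J) A e by apply/bigcupP; exists e0.
rewrite (bigD1 e0) //= xe0 add1n ltnS.
rewrite [X in (_ <= X)%N](bigD1 e0) //=; apply: leq_trans (leq_addr _ _).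
by apply: leq_sum => e /andP [eJ _]; rewrite inE xe0.
Qed.

Section BoolMatrices.
Variable d : nat.
Local Notation M := 'M[bool]_d.
Local Notation cell := ('I_d * 'I_d)%type.

Lemma card_le_determined (S : {set M}) (K : {set cell}) (f : cell -> option cell) :
    (forall c y, c \in K -> f c = Some y -> (y.1 + y.2 < c.1 + c.2)%N) ->
    (forall B c, B \in S -> c \in K ->
       B c.1 c.2 = if f c is Some y then B y.1 y.2 else false) ->
  (#|S| <= 2 ^ #|~: K|)%N.
Proof.
move=> f_lt f_det.
pose restr (B : M) := [ffun c : cell => if c \in K then false else B c.1 c.2].
have restr_inj : {in S &, injective restr}.
  move=> B B' SB SB' eqBB'; apply/matrixP => i j.
  suff eq_below n (c : cell) : (c.1 + c.2 < n)%N -> B c.1 c.2 = B' c.1 c.2.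
    exact: (eq_below _ (i, j) (ltnSn _)).
  elim: n c => [|n IHn] c //= lt_c.
  have [cK|cK] := boolP (c \in K); last first.
    by have := congr1 (fun g : {ffun cell -> bool} => g c) eqBB'; rewrite !ffunE (negbTE cK).
  rewrite (f_det B c SB cK) (f_det B' c SB' cK).
  case fc: (f c) => [y|] //; apply: IHn.
  by have := f_lt c y cK fc; move: lt_c; move: (_ + _)%N (_ + _)%N => u v; lia.
rewrite -(card_in_imset restr_inj).
have -> : (2 ^ #|~: K| = #|pffun_on false (~: K) (@predT bool)|)%N.
  by rewrite card_pffun_on -card_bool.
apply/subset_leq_card/subsetP => g /imsetP [B _ ->]; apply/pffun_onP; split=> //.
by apply/subsetP => c; rewrite !inE ffunE; case: (c \in K).
Qed.

Definition orient (b : bool) (B : M) : M := if b then trmx B else B.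

Lemma orientE b B x k : orient b B x k = if b then B k x else B x k.
Proof. by case: b; rewrite /= ?mxE. Qed.

Definition line_cells (b : bool) (x : 'I_d) : {set cell} :=
  [set c | (if b then c.2 else c.1) == x].

Lemma card_line_cells b x : #|line_cells b x| = d.
Proof.
have -> : line_cells b x = if b then setX setT [set x] else setX [set x] setT.
  by apply/setP => -[c1 c2]; case: b; rewrite !inE ?andbT.
by case: b; rewrite cardsX cards1 cardsT card_ord ?muln1 ?mul1n.
Qed.

Lemma card_line_cellsU {b1 x1 b2 x2} : (b1, x1) != (b2, x2) ->
  (2 * d - 1 <= #|line_cells b1 x1 :|: line_cells b2 x2|)%N.
Proof.
move=> neq12; have := cardsUI (line_cells b1 x1) (line_cells b2 x2).
rewrite !card_line_cells.
suff : (#|line_cells b1 x1 :&: line_cells b2 x2| <= 1)%N by lia.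
apply/card_le1_eqP => -[c1 c2] [c1' c2']; rewrite !inE /=.
case: b1 neq12; case: b2 => /= neq12;
  move=> /andP [/eqP e1 /eqP e2] /andP [/eqP e3 /eqP e4]; subst;
  by rewrite ?eqxx in neq12.
Qed.

Definition forced_line (S : {set M}) (b : bool) (x : 'I_d) (o : option 'I_d) :=
  (forall y, o = Some y -> (y < x)%N) /\
  forall B, B \in S -> forall k,
    orient b B x k = if o is Some y then orient b B y k else false.

Lemma forced_lineS {S S' : {set M}} {b x o} :
  S' \subset S -> forced_line S b x o -> forced_line S' b x o.
Proof. by move=> /subsetP sS'S [o_lt o_det]; split=> // B /sS'S; apply: o_det. Qed.

Definition line_source (b : bool) (o : option 'I_d) (c : cell) : option cell :=
  if o is Some y then Some (if b then (c.1, y) else (y, c.2)) else None.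

Lemma forced_line_cells (S : {set M}) b x o : forced_line S b x o ->
  (forall c y, c \in line_cells b x -> line_source b o c = Some y ->
     (y.1 + y.2 < c.1 + c.2)%N) /\
  (forall B c, B \in S -> c \in line_cells b x ->
     B c.1 c.2 = if line_source b o c is Some y then B y.1 y.2 else false).
Proof.
move=> [o_lt o_det]; split.
  move=> [c1 c2] y; rewrite inE /line_source /=.
  case: o o_lt o_det => [z|] // o_lt _ /eqP cx [<-].
  by have := o_lt z erefl; case: b cx => /= -> ; lia.
move=> B [c1 c2] SB; rewrite inE /= => /eqP cx.
have eqB k := o_det B SB k; rewrite /line_source.
case: b {o_det} eqB cx => eqB /= ->; [move: (eqB c1) | move: (eqB c2)];
  by case: o {o_lt eqB} => [y|]; rewrite !orientE.
Qed.

Lemma card_le_two_forced_lines {S : {set M}} {b1 x1 o1 b2 x2 o2} :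
    (b1, x1) != (b2, x2) -> forced_line S b1 x1 o1 -> forced_line S b2 x2 o2 ->
  (#|S| <= 2 ^ (d * d - (2 * d - 1)))%N.
Proof.
move=> neq12 /forced_line_cells [lt1 det1] /forced_line_cells [lt2 det2].
set K := line_cells b1 x1 :|: line_cells b2 x2.
pose f c := if c \in line_cells b1 x1 then line_source b1 o1 c else line_source b2 o2 c.
apply: (leq_trans (@card_le_determined S K f _ _)).
- move=> c y; rewrite /f inE; case: ifP => [c1 _|_ /= c2]; [exact: lt1 | exact: lt2].
- move=> B c SB; rewrite /f inE; case: ifP => [c1 _|_ /= c2]; [exact: det1 | exact: det2].
apply: leq_pexp2l => //.
have := cardsC K; rewrite card_prod card_ord.
by have := card_line_cellsU neq12; rewrite -/K; lia.
Qed.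

(* [e = (b, (r, s))], [b] selecting rows or columns: for [r < s] line [s] equals
   line [r], for [r = s] line [s] vanishes. *)
Definition degen (e : bool * cell) : {set M} :=
  [set B | [forall k, orient e.1 B e.2.2 k ==
     (if e.2.1 == e.2.2 then false else orient e.1 B e.2.1 k)]].

Lemma degenP b (r s : 'I_d) B : B \in degen (b, (r, s)) ->
  forall k, orient b B s k = if r == s then false else orient b B r k.
Proof. by rewrite inE => /forallP eqB k; apply/eqP/eqB. Qed.

Lemma degen_forced b {r s : 'I_d} : (r <= s)%N ->
  forced_line (degen (b, (r, s))) b s (if r == s then None else Some r).
Proof.
move=> le_rs; split.
  by case: eqP => // /eqP neq_rs y [<-]; rewrite ltn_neqAle neq_rs.
by move=> B /degenP eqB k; rewrite eqB; case: eqP.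
Qed.

Lemma card_degen_ge b (r s : 'I_d) : (2 ^ (d * d - d) <= #|degen (b, (r, s))|)%N.
Proof.
pose F := pffun_on false (~: line_cells b s) (@predT bool).
pose src (c : cell) : cell := if b then (c.1, r) else (r, c.2).
pose ext (g : {ffun cell -> bool}) : M := (\matrix_(i, j)
  if (i, j) \in line_cells b s then (if r == s then false else g (src (i, j)))
  else g (i, j))%R.
have ext_inj : {in F &, injective ext}.
  move=> g g' /pffun_onP [/subsetP g0 _] /pffun_onP [/subsetP g'0 _] eqgg'.
  apply/ffunP => -[i j]; have := congr1 (fun A : M => A i j) eqgg'; rewrite !mxE.
  case: ifP => [ij_line _|//].
  have := g0 (i, j); have := g'0 (i, j); rewrite !in_setC ij_line /= !inE.
  case: (g (i, j)); case: (g' (i, j)) => //= h1 h2; by [move: (h1 isT) | move: (h2 isT)].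
have -> : (d * d - d = #|~: line_cells b s|)%N.
  by have := cardsC (line_cells b s); rewrite card_line_cells card_prod card_ord; lia.
have -> : (2 ^ #|~: line_cells b s| = #|F|)%N by rewrite card_pffun_on -card_bool.
rewrite -(card_in_imset ext_inj).
apply/subset_leq_card/subsetP => A /imsetP [g _ ->]; rewrite inE; apply/forallP => k.
rewrite !orientE /ext /src; clear F ext_inj ext src.
by case: b => /=; rewrite !mxE !inE /= eqxx; case: (r == s).
Qed.

Lemma det_mx01_orient b B : (\det (mx01 (orient b B)) = \det (mx01 B))%R.
Proof.
case: b => //=; rewrite -det_tr; congr (\det _)%R.
by apply/matrixP => i j; rewrite !mxE.
Qed.

Lemma degen_singular b (r s : 'I_d) B : B \in degen (b, (r, s)) -> singular01 B.
Proof.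
move=> /degenP eqB; rewrite /singular01 -(det_mx01_orient b).
have [eq_rs | neq_rs] := eqVneq r s.
  rewrite (expand_det_row _ s) big1 // => j _.
  by rewrite mxE eqB eq_rs eqxx mul0r.
by rewrite (determinant_alternate neq_rs) // => j; rewrite !mxE eqB (negbTE neq_rs).
Qed.

Lemma card_degenI_same_line b (r r' s : 'I_d) : (r < r')%N -> (r' <= s)%N ->
  (#|degen (b, (r, s)) :&: degen (b, (r', s))| <= 2 ^ (d * d - (2 * d - 1)))%N.
Proof.
move=> lt_rr' le_r's; have lt_rs : (r < s)%N := leq_trans lt_rr' le_r's.
have neq_rs : (r == s) = false by apply/negbTE; rewrite neq_ltn lt_rs.
set S := _ :&: _.
have forced_s : forced_line S b s (Some r).
  by move: (degen_forced b (ltnW lt_rs)); rewrite neq_rs; apply/forced_lineS/subsetIl.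
(* With the first relation, the second one makes line [r] vanish if [r' = s],
   and line [r'] a copy of line [r] otherwise. *)
have [eq_r's | neq_r's] := eqVneq r' s.
  apply: (@card_le_two_forced_lines S b s (Some r) b r None) => //.
    by rewrite xpair_eqE eqxx /= eq_sym neq_rs.
  split=> // B; rewrite inE => /andP [/degenP eq1 /degenP eq2] k.
  by have := eq2 k; rewrite eq_r's eqxx eq1 neq_rs.
apply: (@card_le_two_forced_lines S b s (Some r) b r' (Some r)) => //.
  by rewrite xpair_eqE eqxx /= eq_sym neq_r's.
split=> [y [<-] //|B]; rewrite inE => /andP [/degenP eq1 /degenP eq2] k.
by have := eq2 k; rewrite (negbTE neq_r's) eq1 neq_rs => <-.
Qed.

Lemma card_degenI_le b (r s : 'I_d) b' (r' s' : 'I_d) : (r <= s)%N -> (r' <= s')%N ->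
    (b, (r, s)) != (b', (r', s')) ->
  (#|degen (b, (r, s)) :&: degen (b', (r', s'))| <= 2 ^ (d * d - (2 * d - 1)))%N.
Proof.
move=> le_rs le_rs' neq_e.
have [[eq_b eq_s] | neq_lines] := eqVneq (b, s) (b', s'); last first.
  apply: (card_le_two_forced_lines neq_lines).
    exact: forced_lineS (subsetIl _ _) (degen_forced b le_rs).
  exact: forced_lineS (subsetIr _ _) (degen_forced b' le_rs').
subst b' s'.
have neq_rr' : r != r' by apply: contraNneq neq_e => ->.
case: (ltngtP r r') => [lt_rr' | lt_r'r | eq_rr'].
- exact: card_degenI_same_line.
- by rewrite setIC; apply: card_degenI_same_line.
- by move: neq_rr'; rewrite (val_inj eq_rr') eqxx.
Qed.

Definition degen_index : {set bool * cell} := [set e : bool * cell | (e.2.1 <= e.2.2)%N].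

Lemma card_degen_index : #|degen_index| = (d * d + d)%N.
Proof.
set T := [set p : cell | (p.1 <= p.2)%N].
set T' := [set p : cell | (p.2 <= p.1)%N].
have -> : degen_index = setX setT T by apply/setP => -[b [r s]]; rewrite !inE.
rewrite cardsX cardsT card_bool.
have card_T' : #|T'| = #|T|.
  have -> : T' = (fun p : cell => (p.2, p.1)) @: T.
    apply/setP => -[r s]; rewrite inE /=; apply/idP/imsetP => [le_sr|[[r' s'] + [-> ->]]].
      by exists (s, r); rewrite // inE.
    by rewrite inE.
  by apply: card_imset => -[a b] [a' b'] [-> ->].
have TT' : T :|: T' = setT by apply/setP => -[r s]; rewrite !inE /= leq_total.
have T_T' : T :&: T' = [set (i, i) | i : 'I_d].
  apply/setP => -[r s]; rewrite !inE /=; apply/idP/imsetP => [/andP [h1 h2]|[i _ [-> ->]]].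
    by exists r => //; congr (_, _); apply/val_inj/eqP; rewrite /= eqn_leq h1 h2.
  by rewrite leqnn.
have := cardsUI T T'; rewrite TT' T_T' cardsT card_prod card_ord.
rewrite card_imset ?card_ord ?card_T'; last by move=> i j [].
lia.
Qed.

End BoolMatrices.

Lemma card_singular_ge d (m := #|degen_index d|) :
  (m * 2 ^ (d * d - d) <= #|[pred B : 'M[bool]_d | singular01 B]|
                          + m * (m * 2 ^ (d * d - (2 * d - 1))))%N.
Proof.
rewrite {}/m; set J := degen_index d.
set p := (2 ^ (d * d - (2 * d - 1)))%N.
have union_le : (#|\bigcup_(e in J) degen d e| <= #|[pred B : 'M[bool]_d | singular01 B]|)%N.
  apply: subset_leq_card; apply/subsetP => B /bigcupP [[b [r s]] _]; exact: degen_singular.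
have sum_ge : (#|J| * 2 ^ (d * d - d) <= \sum_(e in J) #|degen d e|)%N.
  by rewrite -sum_nat_const; apply: leq_sum => -[b [r s]] _; exact: card_degen_ge.
have sumI_le :
    (\sum_(e in J) \sum_(e' in J | e' != e) #|degen d e :&: degen d e'|
       <= #|J| * (#|J| * p))%N.
  rewrite -sum_nat_const; apply: leq_sum => -[b [r s]] eJ.
  apply: (@leq_trans (\sum_(e' in J | e' != (b, (r, s))) p)).
    apply: leq_sum => -[b' [r' s']] /andP [e'J neq_e].
    move: eJ e'J; rewrite !inE /= => le_rs le_rs'.
    by apply: card_degenI_le le_rs le_rs' _; rewrite eq_sym.
  rewrite sum_nat_const leq_mul2r; apply/orP; right.
  by apply: subset_leq_card; apply/subsetP => e /andP [].
have := card_bigcup_ge _ _ J (degen d); lia.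
Qed.

Lemma bonferroni_margin (d u p q : nat) (m := (d * d + d)%N) :
    (0 < p)%N -> (m * m < d * q)%N -> (m * (p * q) <= u + m * (m * p))%N ->
  (d * d * (p * q) < u)%N.
Proof.
move=> p_gt0 mm_lt le_u.
have : (m * m * p < d * q * p)%N by rewrite ltn_pmul2r.
rewrite /m in le_u *; nia.
Qed.

Lemma cube_lt_pow2 d : (30 <= d)%N -> (4 * d ^ 3 < 2 ^ (d - 1))%N.
Proof.
elim: d => [//|d IHd]; rewrite leq_eqVlt => /orP [/eqP <- | lt_30d].
  by rewrite (_ : 29 = 10 + 10 + 9)%N // !expnD; lia.
have {}IHd := IHd lt_30d.
have -> : (d.+1 - 1 = (d - 1).+1)%N by lia.
have : (d.+1 ^ 3 <= 2 * d ^ 3)%N by rewrite !expnS expn0; nia.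
rewrite (expnS 2 (d - 1)); move: IHd; move: (d.+1 ^ 3)%N (d ^ 3)%N (2 ^ (d - 1))%N.
lia.
Qed.

Lemma card_singular_gt d : (30 <= d)%N ->
  (d ^ 2 * 2 ^ (d * d) < #|[pred B : 'M[bool]_d | singular01 B]| * 2 ^ d)%N.
Proof.
move=> le_30d; have d_gt0 : (0 < d)%N by apply: leq_trans le_30d.
set p := (2 ^ (d * d - (2 * d - 1)))%N; set q := (2 ^ (d - 1))%N.
have pq_eq : (2 ^ (d * d - d) = p * q)%N by rewrite -expnD; congr (_ ^ _)%N; nia.
have := card_singular_ge d; rewrite card_degen_index pq_eq => le_u.
have -> : (2 ^ (d * d) = p * q * 2 ^ d)%N by rewrite -pq_eq -expnD; congr (_ ^ _)%N; nia.
rewrite mulnA ltn_pmul2r ?expn_gt0 // -mulnn; apply: bonferroni_margin le_u.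
  by rewrite expn_gt0.
have := cube_lt_pow2 d le_30d; rewrite -/q => lt_q.
have : (d * (4 * d ^ 3) < d * q)%N by rewrite ltn_pmul2l.
rewrite !expnS expn0; nia.
Qed.

Local Open Scope ring_scope.

Theorem mainTheorem8 :
  exists N : nat, forall d : nat, (N <= d)%N ->
    (d ^ 2)%:R / (2 ^ d)%:R < P d.
Proof.
exists 30%N => d le_30d.
rewrite /P ltr_pdivrMr ?ltr0n ?expn_gt0 // mulrAC ltr_pdivlMr ?ltr0n ?expn_gt0 //.
by rewrite -!natrM ltr_nat card_singular_gt.
Qed.
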